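(* Let $(G,+)$ be a commutative cancellative semigroup. Then there exists a partition $G=A_0\cup A_1$ of $G$ into two cells such that there is no uncountable $X\subseteq G$ and no $i\in 2$ with $\mathrm{FS}(X)\subseteq A_i$. In particular, $\mathrm{Hind}(G,\lambda)$ fails for every uncountable cardinal $\lambda$.
   Context: For $X\subseteq G$, $\mathrm{FS}(X)=\{\sum_{x\in F}x : F\subseteq X \text{ finite and nonempty}\}$ denotes the set of finite sums of (distinct) elements of $X$. For a commutative semigroup $G$ and a cardinal $\lambda$, $\mathrm{Hind}(G,\lambda)$ is the statement: for every partition $G=A_0\cup A_1$ into two cells there exist a set $X\subseteq G$ of cardinality $\lambda$ and an $i\in 2$ with $\mathrm{FS}(X)\subseteq A_i$. *)

From Stdlib Require Import List.
Import ListNotations.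

Definition associative_op {G : Type} (op : G -> G -> G) : Prop :=
  forall a b c, op a (op b c) = op (op a b) c.
Definition commutative_op {G : Type} (op : G -> G -> G) : Prop :=
  forall a b, op a b = op b a.
(* For a commutative operation, left cancellation is cancellation. *)
Definition cancellative_op {G : Type} (op : G -> G -> G) : Prop :=
  forall a b c, op a b = op a c -> b = c.

(* Sum of the nonempty list x :: l (no identity element is needed). *)
Definition sumNE {G : Type} (op : G -> G -> G) (x : G) (l : list G) : G :=
  fold_left op l x.

(* FS(X): the set of sums of finite nonempty sets of distinct elements of X.
   A finite nonempty subset F of X is enumerated by a duplicate-free list x :: l. *)
Definition FS {G : Type} (op : G -> G -> G) (X : G -> Prop) : G -> Prop :=
  fun y => exists (x : G) (l : list G),
    NoDup (x :: l) /\ (forall z, In z (x :: l) -> X z) /\ y = sumNE op x l.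

Definition countable_set {G : Type} (X : G -> Prop) : Prop :=
  exists f : G -> nat, forall x y, X x -> X y -> f x = f y -> x = y.

From Stdlib Require Import List.
From HB Require Import structures.
From mathcomp Require Import all_boot all_algebra.
From mathcomp Require Import boolp wochoice zify.
Set Implicit Arguments. Unset Strict Implicit. Unset Printing Implicit Defensive.
Import GRing.Theory.

(* Embed G into its Grothendieck group V and well-order V.  Relative to this
   well-order every v in V has a unique normal form: a finite sum of terms
   z_a * a with decreasing a, where a has relative order o_a (possibly
   infinite) modulo the subgroup generated by the smaller elements, and
   0 < z_a < o_a.  Colour x in G by the parity of floor(log2 s(x)), s(x) the
   number of terms of its normal form.

   Given an uncountable X, fix the size n of the normal forms uncountably
   often; a Delta-system argument gives a root R and uncountably many x whose
   normal forms are R plus petals of a common size p > 0, so that any finite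
   number of them can be chosen with pairwise disjoint petals avoiding a given
   finite set.  The normal forms of the multiples kR all live in one finite
   set C of size N closed under the relations of finite relative order, so
   the sum of k such elements has exactly s_k + kp terms with s_k <= N.  As k
   grows this count moves in steps of at most N + p < 2^(N+p), hence hits both
   dyadic blocks [2^(N+p), 2^(N+p+1)) and [2^(N+p+1), 2^(N+p+2)), which get
   different colours. *)

(* The point only serves to name the zero of the Grothendieck group; empty
   semigroups are handled separately in the main theorem. *)
Record pointedCancSemigroup := PointedCancSemigroup {
  pcs_sort :> Type;
  pcs_op : pcs_sort -> pcs_sort -> pcs_sort;
  pcs_opA : associative_op pcs_op;
  pcs_opC : commutative_op pcs_op;
  pcs_opK : cancellative_op pcs_op;
  pcs_pt : pcs_sort }.

Section GrothendieckRelation.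
Variable S : pointedCancSemigroup.
Local Notation "a +++ b" := (pcs_op a b) (at level 50, left associativity).

Let opA (a b c : S) : a +++ (b +++ c) = a +++ b +++ c. Proof. exact: pcs_opA. Qed.
Let opC (a b : S) : a +++ b = b +++ a. Proof. exact: pcs_opC. Qed.
Let opCA (a b c : S) : a +++ (b +++ c) = b +++ (a +++ c).
Proof. by rewrite !opA (opC a). Qed.
Let opACA (a b c d : S) : a +++ b +++ (c +++ d) = a +++ c +++ (b +++ d).
Proof. by rewrite -!opA (opCA b). Qed.
Let opKr (a b c : S) : b +++ a = c +++ a -> b = c.
Proof. by rewrite (opC b) (opC c); apply: pcs_opK. Qed.

(* (a, b) stands for the formal difference a - b. *)
Definition grel (p q : S * S) : Prop := p.1 +++ q.2 = q.1 +++ p.2.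

Lemma grel_sym p q : grel p q -> grel q p. Proof. by rewrite /grel => ->. Qed.

Lemma grel_trans p q r : grel p q -> grel q r -> grel p r.
Proof.
rewrite /grel => Hpq Hqr; apply: (@opKr (q.1 +++ q.2)).
rewrite [q.1 +++ q.2]opC opACA [r.2 +++ q.1]opC Hpq Hqr opACA.
by rewrite (opC q.2) [in RHS]opACA (opC q.1 r.1).
Qed.

Lemma grel_swap p q : grel p q -> grel (p.2, p.1) (q.2, q.1).
Proof. by rewrite /grel /= => E; rewrite opC -E opC. Qed.

Definition padd (p q : S * S) : S * S := (p.1 +++ q.1, p.2 +++ q.2).

Lemma grel_padd p p' q q' : grel p p' -> grel q q' -> grel (padd p q) (padd p' q').
Proof. by rewrite /grel /= => Hp Hq; rewrite opACA Hp Hq opACA. Qed.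

Lemma padd_assoc : associative padd.
Proof. by move=> p q r; rewrite /padd /= !opA. Qed.

Lemma padd_comm : commutative padd.
Proof. by move=> p q; rewrite /padd opC [p.2 +++ _]opC. Qed.

Lemma grel_padd_diag p : grel (padd (pcs_pt S, pcs_pt S) p) p.
Proof. by rewrite /grel /= opCA opA. Qed.

Lemma grel_padd_swap p : grel (padd (p.2, p.1) p) (pcs_pt S, pcs_pt S).
Proof. by rewrite /grel /= opC (opC p.2). Qed.

Lemma grel_cancel a b : grel (a +++ pcs_pt S, pcs_pt S) (b +++ pcs_pt S, pcs_pt S) -> a = b.
Proof. by rewrite /grel /= => /opKr /opKr. Qed.

Lemma grel_padd_pt a b :
  grel (a +++ b +++ pcs_pt S, pcs_pt S)
       (padd (a +++ pcs_pt S, pcs_pt S) (b +++ pcs_pt S, pcs_pt S)).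
Proof. by rewrite /grel /padd /= [in RHS]opACA -!opA. Qed.

End GrothendieckRelation.

Definition grothendieck (S : pointedCancSemigroup) :=
  {P : S * S -> Prop | exists p, P = grel p}.
HB.instance Definition _ S := gen_eqMixin (grothendieck S).
HB.instance Definition _ S := gen_choiceMixin (grothendieck S).

Section GrothendieckGroup.
Variable S : pointedCancSemigroup.
Local Notation G := (grothendieck S).

Definition gclass (p : S * S) : G := exist _ (grel p) (ex_intro _ p erefl).

Lemma gclassP p q : gclass p = gclass q <-> grel p q.
Proof.
split=> [/(congr1 sval) /= -> | Hpq]; first by [].
have E : grel p = grel q.
  apply: funext => r; apply: propext.
  by split; [apply: grel_trans (grel_sym Hpq) | apply: grel_trans Hpq].
rewrite /gclass; move: (ex_intro _ p _) (ex_intro _ q _); rewrite E => e1 e2.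
by rewrite (Prop_irrelevance e1 e2).
Qed.

Lemma gclass_surj (u : G) : exists p, u = gclass p.
Proof.
case: u => P [p EP]; exists p; subst P.
by rewrite /gclass; congr exist; apply: Prop_irrelevance.
Qed.

Definition grepr (u : G) : S * S := projT1 (cid (gclass_surj u)).

Lemma greprK u : gclass (grepr u) = u.
Proof. by rewrite /grepr; case: cid. Qed.

Lemma grel_grepr p : grel (grepr (gclass p)) p.
Proof. by apply/gclassP; rewrite greprK. Qed.

Definition gadd (u v : G) : G := gclass (padd (grepr u) (grepr v)).
Definition gopp (u : G) : G := gclass ((grepr u).2, (grepr u).1).
Definition gzero : G := gclass (pcs_pt S, pcs_pt S).

Lemma gadd_class p q : gadd (gclass p) (gclass q) = gclass (padd p q).
Proof. by apply/gclassP; apply: grel_padd; apply: grel_grepr. Qed.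

Lemma gopp_class p : gopp (gclass p) = gclass (p.2, p.1).
Proof. by apply/gclassP/grel_swap/grel_grepr. Qed.

Lemma gaddA : associative gadd.
Proof.
move=> u v w; case: (gclass_surj u) (gclass_surj v) (gclass_surj w) => [p ->] [q ->] [r ->].
by rewrite !gadd_class padd_assoc.
Qed.

Lemma gaddC : commutative gadd.
Proof.
move=> u v; case: (gclass_surj u) (gclass_surj v) => [p ->] [q ->].
by rewrite !gadd_class padd_comm.
Qed.

Lemma gadd0 : left_id gzero gadd.
Proof.
by move=> u; case: (gclass_surj u) => [p ->]; rewrite gadd_class; apply/gclassP/grel_padd_diag.
Qed.

Lemma gaddN : left_inverse gzero gopp gadd.
Proof.
move=> u; case: (gclass_surj u) => [p ->].
by rewrite gopp_class gadd_class; apply/gclassP/grel_padd_swap.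
Qed.

End GrothendieckGroup.

HB.instance Definition _ S :=
  GRing.isZmodule.Build (grothendieck S) (@gaddA S) (@gaddC S) (@gadd0 S) (@gaddN S).

Section GrothendieckEmbedding.
Variable S : pointedCancSemigroup.
Local Open Scope ring_scope.

Definition gemb (a : S) : grothendieck S := gclass (pcs_op a (pcs_pt S), pcs_pt S).

Lemma gembD a b : gemb (pcs_op a b) = gemb a + gemb b.
Proof. by rewrite /gemb [_ + _]gadd_class; apply/gclassP/grel_padd_pt. Qed.

Lemma gemb_inj : injective gemb.
Proof. by move=> a b /gclassP /grel_cancel. Qed.

End GrothendieckEmbedding.

Section WellOrder.
Variables (T : eqType) (R : rel T) (R_wo : well_order R).

Definition wo_lt x y := (x != y) && R x y.

Let R_woT : wo_chain R predT. Proof. by move=> A _; apply: R_wo. Qed.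

Lemma wo_total : total R. Proof. by move=> x y; apply: (wo_chainW R_woT). Qed.

Lemma wo_anti x y : R x y -> R y x -> x = y.
Proof. by move=> Rxy Ryx; apply: (wo_chain_antisymmetric R_woT) => //; apply/andP. Qed.

Lemma wo_refl : reflexive R.
Proof. by move=> x; apply: (wo_chain_reflexive R_woT). Qed.

Lemma wo_trans : transitive R.
Proof.
move=> y x z Rxy Ryz.
have [m [[+ m_min] _]] : exists! m, minimum_of R [mem [:: x; y; z]] m.
  by apply: R_wo; exists x; rewrite inE eqxx.
rewrite !inE => /or3P[] /eqP Em; rewrite {m}Em in m_min.
- by apply: m_min; rewrite !inE eqxx !orbT.
- by rewrite (wo_anti Rxy (m_min x _)) // inE eqxx.
- by rewrite -(wo_anti Ryz (m_min y _)) // !inE eqxx orbT.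
Qed.

Lemma wo_lt_irr : irreflexive wo_lt. Proof. by move=> x; rewrite /wo_lt eqxx. Qed.

Lemma wo_lt_trans : transitive wo_lt.
Proof.
move=> y x z /andP[nxy Rxy] /andP[nyz Ryz]; rewrite /wo_lt (wo_trans Rxy Ryz) andbT.
by apply: contraNneq nxy => Exz; rewrite Exz in Rxy *; rewrite (wo_anti Ryz Rxy).
Qed.

Lemma wo_lt_total x y : x != y -> wo_lt x y || wo_lt y x.
Proof. by rewrite /wo_lt eq_sym => ->; apply: wo_total. Qed.

Lemma wo_lt_wf : well_founded wo_lt.
Proof.
move=> x; apply: contrapT => Nx.
have [m [[Nm m_min] _]] : exists! m, minimum_of R [pred y | `[< ~ Acc wo_lt y >]] m.
  by apply: R_wo; exists x; rewrite inE; apply/asboolP.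
move: Nm; rewrite inE => /asboolP; apply; constructor => y /andP[nmy Rym].
apply: contrapT => Ny; move: nmy; rewrite eq_sym (wo_anti Rym (m_min y _)) ?eqxx //.
by rewrite inE; apply/asboolP.
Qed.

Lemma wo_le_lt_trans x y z : R x y -> wo_lt y z -> wo_lt x z.
Proof.
move=> Rxy /andP[nyz Ryz]; rewrite /wo_lt (wo_trans Rxy Ryz) andbT.
by apply: contraNneq nyz => Exz; rewrite -Exz in Ryz *; rewrite (wo_anti Rxy Ryz).
Qed.

Lemma wo_max (s : seq T) : s != [::] -> exists2 m, m \in s & {in s, forall x, R x m}.
Proof.
elim: s => // x [_ _ | y s IH _].
  by exists x; rewrite ?mem_head // => y; rewrite inE => /eqP->; apply: wo_refl.
have [m ms m_max] := IH isT.
have [Rxm | Rmx] := orP (wo_total x m).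
  exists m; first by rewrite inE ms orbT.
  by move=> z; rewrite inE => /predU1P[-> // | /m_max].
exists x; first exact: mem_head.
move=> z; rewrite inE => /predU1P[-> | /m_max Rzm]; first exact: wo_refl.
exact: wo_trans Rzm Rmx.
Qed.

End WellOrder.

Section NormalForm.
Local Open Scope ring_scope.
Variables (V : zmodType) (I : eqType) (R : rel I) (R_wo : well_order R) (g : I -> V).
Local Notation lt := (wo_lt R).
Local Notation term := (I * int)%type.

Definition supp (l : seq term) : seq I := map fst l.
Definition lincomb (l : seq term) : V := \sum_(t <- l) g t.1 *~ t.2.

Lemma lincomb_cons t l : lincomb (t :: l) = g t.1 *~ t.2 + lincomb l.
Proof. exact: big_cons. Qed.

Lemma lincomb_cat l1 l2 : lincomb (l1 ++ l2) = lincomb l1 + lincomb l2.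
Proof. exact: big_cat. Qed.

Lemma lincomb_perm l1 l2 : perm_eq l1 l2 -> lincomb l1 = lincomb l2.
Proof. exact: perm_big. Qed.

Definition scalez (k : int) (l : seq term) : seq term := [seq (t.1, t.2 * k) | t <- l].

Lemma lincomb_scalez k l : lincomb (scalez k l) = lincomb l *~ k.
Proof. by rewrite /lincomb big_map mulrz_suml; apply: eq_bigr => t _; rewrite mulrzA. Qed.

Lemma supp_cat l1 l2 : supp (l1 ++ l2) = supp l1 ++ supp l2.
Proof. exact: map_cat. Qed.

Lemma supp_scalez k l : supp (scalez k l) = supp l.
Proof. by rewrite /supp -map_comp. Qed.

Lemma lincomb_split a l :
  lincomb l = g a *~ (\sum_(t <- l | t.1 == a) t.2) + lincomb [seq t <- l | t.1 != a].
Proof.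
rewrite /lincomb (bigID (fun t : term => t.1 == a)) /= big_filter; congr (_ + _).
by rewrite mulrz_sumr; apply: eq_bigr => t /eqP ->.
Qed.

Definition span_lt a v := exists2 l, {in supp l, forall b, lt b a} & lincomb l = v.

Lemma span_ltD a u v : span_lt a u -> span_lt a v -> span_lt a (u + v).
Proof.
move=> [l1 l1a <-] [l2 l2a <-]; exists (l1 ++ l2); last exact: lincomb_cat.
by move=> b; rewrite supp_cat mem_cat => /orP[/l1a | /l2a].
Qed.

Lemma span_ltMz a u k : span_lt a u -> span_lt a (u *~ k).
Proof. by move=> [l la <-]; exists (scalez k l); rewrite ?supp_scalez ?lincomb_scalez. Qed.

Lemma span_ltB a u v : span_lt a u -> span_lt a v -> span_lt a (u - v).
Proof. by move=> Hu /(span_ltMz (-1)); rewrite mulrN1z; apply: span_ltD. Qed.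

Definition rel_order a (n : nat) := [/\ (0 < n)%N, span_lt a (g a *+ n)
  & forall m, (0 < m < n)%N -> ~ span_lt a (g a *+ m)].

Lemma rel_order_uniq a n m : rel_order a n -> rel_order a m -> n = m.
Proof.
move=> [n0 an n_min] [m0 am m_min].
by case: (ltngtP n m) => // [nm | mn]; [case: (m_min n) | case: (n_min m)]; rewrite ?n0 ?m0.
Qed.

Lemma rel_order_le a n : (0 < n)%N -> span_lt a (g a *+ n) ->
  exists2 o, rel_order a o & (o <= n)%N.
Proof.
elim/ltn_ind: n => n IH n0 an.
have [[m /andP[m0 mn] am] | no_m] := pselect (exists2 m, (0 < m < n)%N & span_lt a (g a *+ m)).
  by have [o o_ord om] := IH m mn m0 am; exists o => //; apply: leq_trans om (ltnW mn).
by exists n => //; split => // m m_bnd am; apply: no_m; exists m.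
Qed.

Lemma rel_order_le_mulz a d : d != 0 -> span_lt a (g a *~ d) ->
  exists2 o, rel_order a o & (o <= `|d|)%N.
Proof.
case: d => n d0 ad; apply: rel_order_le => //; first by case: n d0 {ad}.
by move: ad => /(span_ltMz (-1)); rewrite NegzE -mulrzA mulrN1 opprK -pmulrn.
Qed.

Definition reduced a (z : int) := z != 0 /\ forall n, rel_order a n -> 0 < z < n%:Z.

Lemma reduced_notin_span a z : reduced a z -> ~ span_lt a (g a *~ z).
Proof.
move=> [z0 z_bnd] /(rel_order_le_mulz z0) [o o_ord]; have := z_bnd o o_ord; lia.
Qed.

Lemma reduced_inj a n m : reduced a n -> reduced a m -> span_lt a (g a *~ (n - m)) -> n = m.
Proof.
move=> [n0 n_bnd] [m0 m_bnd] anm; apply/eqP; apply: contraT => nm.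
have [o o_ord] : exists2 o, rel_order a o & (o <= `|n - m|)%N.
  by apply: rel_order_le_mulz anm; rewrite subr_eq0.
by have := n_bnd o o_ord; have := m_bnd o o_ord; lia.
Qed.

Definition normal (L : seq term) :=
  pairwise (fun t u => lt u.1 t.1) L /\ {in L, forall t, reduced t.1 t.2}.

Lemma normal_consP t L :
  normal (t :: L) <-> [/\ {in supp L, forall b, lt b t.1}, reduced t.1 t.2 & normal L].
Proof.
rewrite /normal pairwise_cons -(all_map fst (lt^~ t.1)).
split=> [[/andP[/allP Lt pL] red] | [Lt red_t [pL red]]].
  by split=> //; [apply: red; rewrite mem_head | split=> // u uL; apply: red; rewrite inE uL orbT].
split; first by apply/andP; split=> //; apply/allP.
by move=> u; rewrite inE => /predU1P[-> | /red].
Qed.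

Lemma normal_uniq L : normal L -> uniq (supp L).
Proof.
case=> pL _; apply: (@pairwise_uniq _ (fun b c => lt c b)); last by rewrite pairwise_map.
by move=> b; apply: wo_lt_irr.
Qed.

Lemma normal_top_neq a n L1 L2 : normal ((a, n) :: L1) -> {in supp L2, forall b, lt b a} ->
  lincomb ((a, n) :: L1) <> lincomb L2.
Proof.
move=> /normal_consP[/= L1a red_n _] L2a E; apply: (reduced_notin_span red_n).
have -> : g a *~ n = lincomb L2 - lincomb L1 by rewrite -E lincomb_cons addrK.
by apply: span_ltB; [exists L2 | exists L1].
Qed.

Lemma normal_lincomb_inj L1 L2 : normal L1 -> normal L2 -> lincomb L1 = lincomb L2 -> L1 = L2.
Proof.
elim: L1 L2 => [|[a n] L1 IH] [|[b m] L2] // nL1 nL2 E.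
- by case: (normal_top_neq nL2 (L2 := [::])).
- by case: (normal_top_neq nL1 (L2 := [::])).
have /normal_consP[/= L1a red_n nL1'] := nL1.
have /normal_consP[/= L2a red_m nL2'] := nL2.
have [ab | ab] := eqVneq a b.
  rewrite -{b}ab in L2a red_m nL2 E *.
  have En : g a *~ n + lincomb L1 = g a *~ m + lincomb L2 by move: E; rewrite !lincomb_cons.
  have nm : n = m.
    apply: (reduced_inj red_n red_m); rewrite mulrzBr.
    have -> : g a *~ n - g a *~ m = lincomb L2 - lincomb L1.
      by apply/eqP; rewrite subr_eq addrAC (addrC (lincomb L2)) -En addrK.
    by apply: span_ltB; [exists L2 | exists L1].
  by rewrite -nm in En *; rewrite (IH L2) // (addrI _ En).
exfalso; case/orP: (wo_lt_total R_wo ab) => [ab' | ba'].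
- apply: (normal_top_neq nL2 (L2 := (a, n) :: L1)) (esym E) => c.
  by rewrite inE => /predU1P[-> // | /L1a ca]; apply: wo_lt_trans ca ab'.
- apply: (normal_top_neq nL1 (L2 := (b, m) :: L2)) E => c.
  by rewrite inE => /predU1P[-> // | /L2a cb]; apply: wo_lt_trans cb ba'.
Qed.

Definition order_closed (S : I -> Prop) := forall a o, S a -> rel_order a o ->
  exists2 l, {in supp l, forall b, S b /\ lt b a} & lincomb l = g a *+ o.

Lemma order_closedT : order_closed (fun=> True).
Proof. by move=> a o _ [_ [l la El] _]; exists l => // b /la. Qed.

(* Reduce the total coefficient of [a] modulo its relative order, rewriting
   the carry as a combination of smaller generators. *)
Lemma reduce_top S a l : order_closed S -> {in supp l, forall b, S b /\ R b a} ->
  exists r l', [/\ lincomb l = g a *~ r + lincomb l', {in supp l', forall b, S b /\ lt b a},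
                   r != 0 -> S a & forall n, rel_order a n -> 0 <= r < n%:Z].
Proof.
move=> S_closed Sl; set M := \sum_(t <- l | t.1 == a) t.2; set l' := [seq t <- l | t.1 != a].
have Sl' : {in supp l', forall b, S b /\ lt b a}.
  move=> b /mapP[t]; rewrite mem_filter => /andP[nta tl] ->.
  by have [St Rta] := Sl _ (map_f fst tl); split; rewrite // /wo_lt nta.
have [Sa | NSa] := pselect (S a); last first.
  have M0 : M = 0.
    rewrite /M big_seq_cond big1 // => t /andP[tl /eqP ta].
    by case: NSa; rewrite -ta; case: (Sl _ (map_f fst tl)).
  exists 0, l'; split=> //; last by move=> n [n0 _ _]; lia.
  by rewrite -M0; apply: lincomb_split.
have [[o o_ord] | no_ord] := pselect (exists o, rel_order a o); last first.
  exists M, l'; split=> //; first exact: lincomb_split.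
  by move=> n n_ord; case: no_ord; exists n.
have [lo Slo Elo] := S_closed a o Sa o_ord.
have o_gt0 : (0 < o)%N by case: o_ord.
exists (M %% o)%Z, (l' ++ scalez (M %/ o)%Z lo); split=> //.
- have EM : g a *~ M = g a *~ (M %% o)%Z + (g a *+ o) *~ (M %/ o)%Z.
    by rewrite {1}(divz_eq M o) mulrzDr addrC pmulrn -mulrzA mulrC.
  rewrite lincomb_cat lincomb_scalez Elo (lincomb_split a l) -/M -/l' EM.
  by rewrite -!addrA; congr (_ + _); rewrite addrC.
- by move=> b; rewrite supp_cat mem_cat supp_scalez => /orP[/Sl' | /Slo].
- by move=> n n_ord; rewrite (rel_order_uniq n_ord o_ord) modz_ge0 ?ltz_pmod //; lia.
Qed.

Lemma normal_form_le S a l : order_closed S -> {in supp l, forall b, S b /\ R b a} ->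
  exists2 L, normal L /\ {in supp L, forall b, S b /\ R b a} & lincomb L = lincomb l.
Proof.
move=> S_closed; elim/(well_founded_induction (wo_lt_wf R_wo)): a l => a IH l Sl.
have [r [l' [El Sl' Sa r_bnd]]] := reduce_top S_closed Sl.
have [L' [nL' SL'] EL'] : exists2 L', normal L' /\ {in supp L', forall b, S b /\ lt b a}
    & lincomb L' = lincomb l'.
  have [/(congr1 size) | l'_ne] := eqVneq (supp l') [::].
    by rewrite size_map => /size0nil->; exists [::].
  have [b bl' b_max] := wo_max R_wo l'_ne; have ba := (Sl' b bl').2.
  have [|L' [nL' SL'] EL'] := IH b ba l'.
    by move=> c cl'; split; [case: (Sl' c cl') | apply: b_max].
  by exists L' => //; split=> // c /SL'[Sc Rcb]; split=> //; apply: wo_le_lt_trans Rcb ba.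
have [r0 | r_ne0] := eqVneq r 0.
  exists L'; last by rewrite El EL' r0 mulr0z add0r.
  by split=> // b /SL'[Sb /andP[_ Rba]]; split.
exists ((a, r) :: L'); last by rewrite lincomb_cons EL' El.
split.
  apply/normal_consP; split=> //; first by move=> b /SL'[].
  by split=> //= n /r_bnd; move: r_ne0; lia.
move=> b; rewrite inE => /predU1P[-> | /SL'[Sb /andP[_ Rba]]] //.
by split; [apply: Sa | apply: wo_refl].
Qed.

Lemma normal_form_exists S l : order_closed S -> {in supp l, forall b, S b} ->
  exists2 L, normal L /\ {in supp L, forall b, S b} & lincomb L = lincomb l.
Proof.
move=> S_closed Sl; have [/(congr1 size) | l_ne] := eqVneq (supp l) [::].
  by rewrite size_map => /size0nil->; exists [::].
have [a al a_max] := wo_max R_wo l_ne.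
have [|L [nL SL] EL] := @normal_form_le S a l S_closed.
  by move=> b bl; split; [apply: Sl | apply: a_max].
by exists L => //; split=> // b /SL[].
Qed.

Lemma normal_perm_exists W : uniq (supp W) -> {in W, forall t, reduced t.1 t.2} ->
  exists2 L, normal L & perm_eq L W.
Proof.
move=> uW redW; pose leT (t u : term) := R u.1 t.1.
have leT_total : total leT by move=> t u; rewrite /leT wo_total.
have leT_tr : transitive leT.
  by move=> u t v; rewrite /leT => Rut Rvu; exact: (wo_trans R_wo Rvu Rut).
have pW : perm_eq (sort leT W) W by apply/permPl/perm_sort.
exists (sort leT W) => //; split; last by move=> t; rewrite (perm_mem pW); apply: redW.
have : pairwise [rel t u | (t.1 != u.1) && leT t u] (sort leT W).
  rewrite (pairwise_relI (relpre fst [rel x y | x != y])) -pairwise_map -uniq_pairwise.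
  by rewrite (perm_uniq (perm_map fst pW)) uW -sorted_pairwise // sort_sorted.
by apply: sub_pairwise => t u /andP[ntu Rut]; rewrite /wo_lt eq_sym ntu.
Qed.

Lemma normal_size W L : uniq (supp W) -> {in W, forall t, reduced t.1 t.2} ->
  normal L -> lincomb L = lincomb W -> size L = size W.
Proof.
move=> uW redW nL EL; have [L' nL' pL'] := normal_perm_exists uW redW.
by rewrite (normal_lincomb_inj nL nL') ?(perm_size pL') // EL (lincomb_perm pL').
Qed.

Definition order_closed_seq (C : seq I) := order_closed (fun b => b \in C).

Lemma normal_supp_closed C l L : order_closed_seq C -> {subset supp l <= C} ->
  normal L -> lincomb L = lincomb l -> {subset supp L <= C}.
Proof.
move=> C_closed lC nL EL; have [L' [nL' L'C] EL'] := normal_form_exists C_closed lC.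
by rewrite (normal_lincomb_inj nL nL') // EL EL'.
Qed.

Lemma order_closed_seq_cat C1 C2 :
  order_closed_seq C1 -> order_closed_seq C2 -> order_closed_seq (C1 ++ C2).
Proof.
move=> C1_closed C2_closed a o; rewrite mem_cat => /orP[aC | aC] a_ord.
  have [l lC El] := C1_closed a o aC a_ord.
  by exists l => // b /lC[bC ba]; rewrite mem_cat bC.
have [l lC El] := C2_closed a o aC a_ord.
by exists l => // b /lC[bC ba]; rewrite mem_cat bC orbT.
Qed.

Lemma order_closure_seq (s : seq I) :
  {in s, forall a, exists2 C : seq I, a \in C & order_closed_seq C} ->
  exists2 C : seq I, {subset s <= C} & order_closed_seq C.
Proof.
elim: s => [_ | a s IH s_cl]; first by exists [::] => // a o; rewrite in_nil.
have [Ca aCa Ca_closed] := s_cl a (mem_head _ _).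
have [|C sC C_closed] := IH; first by move=> b bs; apply: s_cl; rewrite inE bs orbT.
exists (Ca ++ C); last exact: order_closed_seq_cat.
by move=> b; rewrite inE mem_cat => /predU1P[-> | /sC ->]; rewrite ?aCa ?orbT.
Qed.

Lemma order_closure a : exists2 C : seq I, a \in C & order_closed_seq C.
Proof.
elim/(well_founded_induction (wo_lt_wf R_wo)): a => a IH.
have [[o o_ord] | no_ord] := pselect (exists o, rel_order a o); last first.
  exists [:: a]; first exact: mem_head.
  by move=> b o; rewrite inE => /eqP-> a_ord; case: no_ord; exists o.
have [_ [l la El] _] := o_ord.
have [|C lC C_closed] := @order_closure_seq (supp l); first by move=> b /la; apply: IH.
exists (a :: C); first exact: mem_head.
move=> b o'; rewrite inE => /predU1P[-> a_ord | bC b_ord].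
  rewrite (rel_order_uniq a_ord o_ord); exists l => // c cl.
  by split; [rewrite inE lC ?orbT | apply: la].
have [l' l'C El'] := C_closed b o' bC b_ord.
by exists l' => // c /l'C[cC cb]; rewrite inE cC orbT.
Qed.

End NormalForm.

Section Countability.
Variable A : Type.
Implicit Types Y Z : A -> Prop.

Lemma countable_sub Y Z : (forall x, Y x -> Z x) -> countable_set Z -> countable_set Y.
Proof. by move=> YZ [f f_inj]; exists f => x y /YZ Zx /YZ Zy; apply: f_inj. Qed.

Lemma countable_subsingleton Y : (forall x y, Y x -> Y y -> x = y) -> countable_set Y.
Proof. by move=> Y_sub; exists (fun=> 0%N) => x y Yx Yy _; apply: Y_sub. Qed.

Lemma countable_bigcup (B : countType) (F : B -> A -> Prop) :
  (forall b, countable_set (F b)) -> countable_set (fun x => exists b, F b x).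
Proof.
move=> Fc; have [f f_inj] : exists f : B -> A -> nat,
    forall b x y, F b x -> F b y -> f b x = f b y -> x = y.
  by exists (fun b => projT1 (cid (Fc b))) => b; case: cid.
exists (fun x => if pselect (exists b, F b x) is left e
                 then pickle (projT1 (cid e), f (projT1 (cid e)) x) else 0%N).
move=> x y Fx Fy; case: pselect => // ex; case: pselect => // ey.
case: (cid ex) => b Fbx; case: (cid ey) => b' Fb'y /= /(pcan_inj pickleK) [Ebb'].
by rewrite -{b'}Ebb' in Fb'y *; apply: f_inj.
Qed.

Lemma countable_union Y Z : countable_set Y -> countable_set Z ->
  countable_set (fun x => Y x \/ Z x).
Proof.
move=> Yc Zc; apply: countable_sub (countable_bigcup (F := fun b : bool => if b then Y else Z) _).
  by move=> x [Yx | Zx]; [exists true | exists false].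
by case.
Qed.

Lemma countable_bigcup_seq (B : eqType) (s : seq B) (F : B -> A -> Prop) :
  {in s, forall b, countable_set (F b)} -> countable_set (fun x => exists2 b, b \in s & F b x).
Proof.
elim: s => [_ | b s IH Fc]; first by apply: countable_subsingleton => x y [].
apply: countable_sub (countable_union (Fc b (mem_head _ _)) (IH _)) => [x [c] | c cs].
  by rewrite inE => /predU1P[-> | cs]; [left | right; exists c].
by apply: Fc; rewrite inE cs orbT.
Qed.

Lemma countable_In (l : list A) : countable_set (fun x => List.In x l).
Proof.
apply: countable_sub (countable_bigcup (F := fun n x => List.nth_error l n = Some x) _).
  by move=> x xl; have [n ln] := In_nth_error l x xl; exists n.
by move=> n; apply: countable_subsingleton => x y -> [].
Qed.

Lemma uncountable_fiber (B : countType) Y (h : A -> B) : ~ countable_set Y ->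
  exists b, ~ countable_set (fun x => Y x /\ h x = b).
Proof.
move=> Yu; apply: contrapT => fib_cnt; apply: Yu.
apply: countable_sub (countable_bigcup (F := fun b x => Y x /\ h x = b) _) => [x Yx | b].
  by exists (h x).
by apply: contrapT => bu; apply: fib_cnt; exists b.
Qed.

Lemma uncountable_avoid Y Z : ~ countable_set Y -> countable_set Z -> exists x, Y x /\ ~ Z x.
Proof.
move=> Yu Zc; apply: contrapT => noY; apply: Yu; apply: countable_sub Zc => x Yx.
by apply: contrapT => Zx; apply: noY; exists x.
Qed.

End Countability.

Section DeltaSystem.
Variables (A : Type) (T : eqType).

Lemma delta_system n (S : A -> seq T) (Y : A -> Prop) : ~ countable_set Y ->
  (forall x, Y x -> uniq (S x) /\ size (S x) = n) ->
  exists (R : seq T) (P : A -> seq T) (Y' : A -> Prop), [/\ ~ countable_set Y',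
    forall x, Y' x -> Y x /\ perm_eq (S x) (R ++ P x)
    & forall t, countable_set (fun x => Y' x /\ t \in P x)].
Proof.
elim: n S Y => [|n IH] S Y Yu Y_S;
  have [[t tu] | all_cnt] := pselect (exists t, ~ countable_set (fun x => Y x /\ t \in S x));
  try by exists [::], S, Y; split=> // t; apply: contrapT => tu; apply: all_cnt; exists t.
  by case: tu; apply: countable_subsingleton => x y [Yx]; have [_ /size0nil->] := Y_S x Yx.
have Y_S' x : Y x /\ t \in S x -> uniq (rem t (S x)) /\ size (rem t (S x)) = n.
  by move=> [/Y_S[uS sS] tS]; rewrite rem_uniq // size_rem // sS.
have [R [P [Y' [Y'u Y'_RP P_cnt]]]] := IH _ _ tu Y_S'.
exists (t :: R), P, Y'; split=> // x /Y'_RP[[Yx tS] pS]; split=> //.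
by apply: perm_trans (perm_to_rem tS) _; rewrite perm_cons.
Qed.

Lemma countable_fst_occurrence (K : eqType) (B : countType) (P : A -> seq (K * B)) Y :
  (forall t, countable_set (fun x => Y x /\ t \in P x)) ->
  forall k, countable_set (fun x => Y x /\ k \in map fst (P x)).
Proof.
move=> P_cnt k; apply: countable_sub (countable_bigcup (fun b => P_cnt (k, b))).
by move=> x [Yx /mapP[[k' b] kbP /= ->]]; exists b.
Qed.

Lemma disjoint_choice (P : A -> seq T) (Y : A -> Prop) : ~ countable_set Y ->
  (forall x, Y x -> uniq (P x)) -> (forall t, countable_set (fun x => Y x /\ t \in P x)) ->
  forall m (F : seq T), exists xs : list A, [/\ size xs = m, List.NoDup xs,
    forall x, List.In x xs -> Y x, uniq (flatten (map P xs))
    & ~~ has (mem F) (flatten (map P xs))].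
Proof.
move=> Yu P_uniq P_cnt m F; elim: m => [|m [xs [sxs nd_xs Y_xs u_xs F_xs]]].
  by exists [::]; split=> //; constructor.
set U := F ++ flatten (map P xs).
have Z_cnt : countable_set (fun x => (exists2 t, t \in U & Y x /\ t \in P x) \/ List.In x xs).
  by apply: countable_union (countable_In _); apply: countable_bigcup_seq => t _.
have [x [Yx Zx]] := uncountable_avoid Yu Z_cnt.
have Px_U t : t \in P x -> t \notin U by move=> tP; apply/negP => tU; apply: Zx; left; exists t.
exists (x :: xs); split=> /=; first by rewrite sxs.
- by constructor=> // xxs; apply: Zx; right.
- by move=> y [<- | /Y_xs].
- rewrite cat_uniq P_uniq // u_xs andbT; apply/hasPn => t t_xs; apply/negP => /Px_U.
  by rewrite mem_cat t_xs orbT.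
- rewrite has_cat negb_or F_xs andbT; apply/hasPn => t /Px_U.
  by rewrite mem_cat negb_or => /andP[].
Qed.

Lemma mem_flatten_map_In (P : A -> seq T) (xs : list A) t :
  t \in flatten (map P xs) -> exists2 x, List.In x xs & t \in P x.
Proof.
elim: xs => //= x xs IH; rewrite mem_cat => /orP[tP | /IH[y y_xs tP]].
  by exists x => //; left.
by exists y => //; right.
Qed.

End DeltaSystem.

Lemma size_flatten_map_In (A T : Type) (P : A -> seq T) (xs : list A) p :
  (forall x, List.In x xs -> size (P x) = p) -> size (flatten (map P xs)) = (size xs * p)%N.
Proof.
elim: xs => //= x xs IH sP; rewrite size_cat sP ?IH ?mulSn //; last by left.
by move=> y y_xs; apply: sP; right.
Qed.

Lemma discrete_ivt (f : nat -> nat) a b d t : a <= b ->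
  (forall k, a <= k < b -> f k.+1 <= f k + d) -> f a < t <= f b ->
  exists2 k, a < k <= b & t <= f k < t + d.
Proof.
move=> + f_step /andP[fat]; elim: b f_step => [|b IH] f_step ab tfb.
  by move: ab fat tfb; rewrite leqn0 => /eqP->; lia.
have [ab' | ba] := leqP a b; last first.
  have Ea : a = b.+1 by lia.
  by move: fat tfb; rewrite Ea; lia.
have [tfb' | fbt] := leqP t (f b).
  have [|k akb tfk] := IH _ ab' tfb'; last by exists k => //; lia.
  by move=> k /andP[ak kb]; apply: f_step; rewrite ak ltnW.
by exists b.+1; [lia | have := f_step b; rewrite ab' ltnSn => /(_ isT); lia].
Qed.

Lemma trunc_log2_hit (f : nat -> nat) a b e : a <= b ->
  (forall k, a <= k < b -> f k.+1 <= f k + 2 ^ e) -> f a < 2 ^ e <= f b ->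
  exists2 k, a < k <= b & trunc_log 2 (f k) = e.
Proof.
move=> ab f_step fab; have [k kab /andP[lo hi]] := discrete_ivt ab f_step fab.
by exists k => //; apply: trunc_log_eq => //; rewrite expnS; lia.
Qed.

(* Steps of size at most [M < 2 ^ M] cannot jump over the dyadic levels
   [2 ^ M] and [2 ^ M.+1], whose logarithms have different parities. *)
Lemma odd_trunc_log_change (f : nat -> nat) b M : 0 < b ->
  (forall k, 0 < k < b -> f k.+1 <= f k + M) -> f 1 <= M -> 2 ^ M.+1 <= f b ->
  exists k1 k2, [/\ 0 < k1 <= b, 0 < k2 <= b
                  & odd (trunc_log 2 (f k1)) != odd (trunc_log 2 (f k2))].
Proof.
move=> b_gt0 f_step f1 fb; have M_lt := ltn_expl M (isT : 1 < 2).
have step e : M <= 2 ^ e -> forall k, 0 < k < b -> f k.+1 <= f k + 2 ^ e.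
  by move=> Me k /f_step; lia.
rewrite expnS in fb.
have [k1 /andP[k1_gt1 k1b] k1M] : exists2 k, 1 < k <= b & trunc_log 2 (f k) = M.
  by apply: trunc_log2_hit b_gt0 (step M _) _; lia.
have [k2 /andP[k2_gt1 k2b] k2M] : exists2 k, 1 < k <= b & trunc_log 2 (f k) = M.+1.
  by apply: trunc_log2_hit b_gt0 (step M.+1 _) _; rewrite expnS; lia.
by exists k1, k2; rewrite k1M k2M /=; split; [lia | lia | case: (odd M)].
Qed.

Section Colouring.
Local Open Scope ring_scope.
Variable S : pointedCancSemigroup.
Local Notation V := (grothendieck S).

Definition gwo : rel V := sval (well_ordering_principle V).

Lemma gwo_wo : well_order gwo. Proof. exact: svalP (well_ordering_principle V). Qed.

Local Notation comb := (@lincomb V V id).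
Local Notation normalV := (@normal V V gwo id).

Lemma nf_exists (v : V) : exists L, normalV L /\ comb L = v.
Proof.
have [|L [nL _] EL] :=
  normal_form_exists gwo_wo (order_closedT (R := gwo) (g := id)) (l := [:: (v, 1)]) => //.
by exists L; rewrite EL /lincomb big_seq1 mulr1z.
Qed.

Definition nf (v : V) : seq (V * int) := projT1 (cid (nf_exists v)).

Lemma nf_normal v : normalV (nf v). Proof. by rewrite /nf; case: cid => L []. Qed.

Lemma lincomb_nf v : comb (nf v) = v. Proof. by rewrite /nf; case: cid => L []. Qed.

Definition nsize (a : S) : nat := size (nf (gemb a)).

Definition colour (a : S) : bool := odd (trunc_log 2 (nsize a)).

Lemma gemb_sumNE a l : gemb (sumNE (@pcs_op S) a l) = \sum_(b <- a :: l) gemb b.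
Proof.
elim: l a => [|b l IH] a /=; first by rewrite big_seq1.
by rewrite IH !big_cons gembD addrA.
Qed.

Lemma sum_gemb_split Rt P (zs : list S) :
  (forall z, List.In z zs -> gemb z = comb Rt + comb (P z)) ->
  \sum_(z <- zs) gemb z = comb Rt *+ size zs + comb (flatten (map P zs)).
Proof.
elim: zs => [|z zs IH] E /=; first by rewrite big_nil /lincomb big_nil addr0.
rewrite big_cons IH => [|y y_zs]; last by apply: E; right.
by rewrite E /=; [rewrite lincomb_cat mulrS addrACA | left].
Qed.

Lemma supp_nf_mulz_sub Rt C (k : int) : order_closed_seq gwo id C ->
  {subset supp Rt <= C} -> {subset supp (nf (comb Rt *~ k)) <= C}.
Proof.
move=> C_closed RtC.
apply: (normal_supp_closed gwo_wo (l := scalez k Rt)) C_closed _ (nf_normal _) _.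
  by rewrite supp_scalez.
by rewrite lincomb_nf lincomb_scalez.
Qed.

Lemma size_nf_mulz_le Rt C (k : int) : order_closed_seq gwo id C ->
  {subset supp Rt <= C} -> (size (nf (comb Rt *~ k)) <= size C)%N.
Proof.
move=> C_closed RtC; rewrite -(size_map fst).
exact: uniq_leq_size (normal_uniq (nf_normal _)) (supp_nf_mulz_sub (k := k) C_closed RtC).
Qed.

Lemma nf_size_sum Rt P C (zs : list S) :
  order_closed_seq gwo id C -> {subset supp Rt <= C} ->
  (forall z, List.In z zs -> perm_eq (nf (gemb z)) (Rt ++ P z)) ->
  uniq (flatten (map (fun z => supp (P z)) zs)) ->
  ~~ has (mem C) (flatten (map (fun z => supp (P z)) zs)) ->
  size (nf (\sum_(z <- zs) gemb z)) =
    (size (nf (comb Rt *~ size zs)) + size (flatten (map P zs)))%N.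
Proof.
move=> C_closed RtC zs_RtP u_petals C_petals.
have L0C := supp_nf_mulz_sub (k := size zs) C_closed RtC.
rewrite -size_cat; apply: (normal_size gwo_wo); [| | exact: nf_normal |].
- rewrite supp_cat /supp map_flatten -map_comp cat_uniq (normal_uniq (nf_normal _)) /=.
  rewrite u_petals andbT; apply: contra C_petals => /hasP[a a_petals aL0].
  by apply/hasP; exists a => //; apply: L0C.
- move=> t; rewrite mem_cat => /orP[tL0 | /mem_flatten_map_In[z z_zs tP]].
    by have [_] := nf_normal (comb Rt *~ size zs); apply.
  have [_] := nf_normal (gemb z); apply.
  by rewrite (perm_mem (zs_RtP z z_zs)) mem_cat tP orbT.
rewrite lincomb_nf lincomb_cat lincomb_nf (sum_gemb_split (Rt := Rt) (P := P)) ?pmulrn // => z z_zs.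
by rewrite -lincomb_cat -(lincomb_perm _ (zs_RtP z z_zs)) lincomb_nf.
Qed.

Lemma nf_perm_cat v L1 L2 : perm_eq (nf v) (L1 ++ L2) ->
  [/\ v = comb L1 + comb L2, uniq (supp L2) & size (nf v) = (size L1 + size L2)%N].
Proof.
move=> pv; split; first by rewrite -lincomb_cat -(lincomb_perm _ pv) lincomb_nf.
  move: (normal_uniq (nf_normal v)).
  by rewrite (perm_uniq (perm_map fst pv)) map_cat cat_uniq => /and3P[].
by rewrite (perm_size pv) size_cat.
Qed.

Definition delta_family (X Y : S -> Prop) Rt (P : S -> seq (V * int)) p :=
  [/\ ~ countable_set Y,
      forall x, Y x -> [/\ X x, perm_eq (nf (gemb x)) (Rt ++ P x) & size (P x) = p]
    & forall t, countable_set (fun x => Y x /\ t \in P x)].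

Lemma delta_family_exists X : ~ countable_set X ->
  exists Y Rt P p, delta_family X Y Rt P p /\ (0 < p)%N.
Proof.
move=> Xu; have [n Xn_u] := uncountable_fiber nsize Xu.
have [|Rt [P [Y [Yu Y_RtP P_cnt]]]] := delta_system (n := n) (S := fun x => nf (gemb x)) Xn_u.
  by move=> x [_ sx]; split=> //; apply: map_uniq (normal_uniq (nf_normal _)).
have Y_petal x : Y x -> [/\ X x, perm_eq (nf (gemb x)) (Rt ++ P x) & size (P x) = (n - size Rt)%N].
  move=> /Y_RtP[[Xx <-] pRtP]; split=> //.
  by rewrite /nsize; have [_ _ ->] := nf_perm_cat pRtP; rewrite addKn.
exists Y, Rt, P, (n - size Rt)%N; split=> //.
rewrite lt0n; apply/eqP => p0; apply: Yu; apply: countable_subsingleton => x y Yx Yy.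
have [_ /nf_perm_cat[Ex _ _] sx] := Y_petal x Yx; have [_ /nf_perm_cat[Ey _ _] sy] := Y_petal y Yy.
by apply: gemb_inj; rewrite Ex Ey; move: sx sy; rewrite p0 => /size0nil-> /size0nil->.
Qed.

Lemma delta_family_FS X Y Rt P p C k : delta_family X Y Rt P p ->
  order_closed_seq gwo id C -> {subset supp Rt <= C} -> (0 < k)%N ->
  exists2 y, FS (@pcs_op S) X y & nsize y = (size (nf (comb Rt *~ k)) + k * p)%N.
Proof.
move=> [Yu Y_petal P_cnt] C_closed RtC k_gt0.
have [|xs [sxs nd_xs Y_xs u_xs C_xs]] :=
  disjoint_choice (P := fun x => supp (P x)) Yu _ (countable_fst_occurrence P_cnt) k C.
  by move=> x /Y_petal[_ /nf_perm_cat[]].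
case: xs sxs nd_xs Y_xs u_xs C_xs => [|a l] sxs nd_xs Y_xs u_xs C_xs.
  by rewrite -sxs in k_gt0.
exists (sumNE (@pcs_op S) a l).
  by exists a, l; split; last split=> // z /Y_xs /Y_petal[].
rewrite /nsize gemb_sumNE (nf_size_sum (P := P) C_closed RtC) //.
  by rewrite (size_flatten_map_In (p := p)) ?sxs // => z /Y_xs /Y_petal[].
by move=> z /Y_xs /Y_petal[].
Qed.

Lemma colour_not_FS_monochromatic (X : S -> Prop) (i : bool) : ~ countable_set X ->
  ~ (forall y, FS (@pcs_op S) X y -> colour y = i).
Proof.
move=> /delta_family_exists[Y [Rt [P [p [family p_gt0]]]]] mono.
have [C RtC C_closed] := order_closure_seq (s := supp Rt) (fun a _ => order_closure gwo_wo id a).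
pose M := (size C + p)%N; pose f (k : nat) := (size (nf (comb Rt *~ k)) + k * p)%N.
have s_le (k : nat) : (size (nf (comb Rt *~ k)) <= size C)%N := size_nf_mulz_le k C_closed RtC.
have b_gt0 : (0 < 2 ^ M.+1)%N by rewrite expn_gt0.
have f_step k : (0 < k < 2 ^ M.+1)%N -> (f k.+1 <= f k + M)%N.
  by rewrite /f /M mulSn; have := s_le k.+1; lia.
have f1 : (f 1 <= M)%N by rewrite /f /M mul1n; have := s_le 1%N; lia.
have fb : (2 ^ M.+1 <= f (2 ^ M.+1))%N by apply: leq_trans (leq_pmulr _ p_gt0) (leq_addl _ _).
have [k1 [k2 [/andP[k1_gt0 _] /andP[k2_gt0 _] parity]]] :=
  odd_trunc_log_change b_gt0 f_step f1 fb.
have [y1 /mono c1 s1] := delta_family_FS family C_closed RtC k1_gt0.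
have [y2 /mono c2 s2] := delta_family_FS family C_closed RtC k2_gt0.
by move: c1 c2 parity; rewrite /colour /f s1 s2 => -> ->; rewrite eqxx.
Qed.

End Colouring.

Theorem theorem3p2 (G : Type) (op : G -> G -> G)
  (Hassoc : associative_op op) (Hcomm : commutative_op op)
  (Hcanc : cancellative_op op) :
  exists c : G -> bool,
    forall (X : G -> Prop) (i : bool),
      ~ countable_set X ->
      ~ (forall y, FS op X y -> c y = i).
Proof.
have [[g0] | G_empty] := pselect (inhabited G).
  pose S := PointedCancSemigroup Hassoc Hcomm Hcanc g0.
  by exists (@colour S) => X i; apply: (@colour_not_FS_monochromatic S).
exists (fun=> true) => X i; case.
by exists (fun=> 0%N) => x; case: G_empty; constructor.
Qed.
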